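(* Let $a$ be real with $|a|>1$, let $x$ be the real solution of $x^{5}+x=a$, and put $y=x/a$. Define the numbers $c_k$ ($k\ge 1$) by $c_1=\tfrac15$ and $c_{k+1}=\dfrac{5k-1}{5(k+1)}\,c_k$ (so that $(1-y)^{1/5}=1-\sum_{k\ge1}c_k y^k$ for $|y|<1$). Define $$K_{0}=1+\sum_{m=1}^{\infty}\frac{(-1)^{m}}{a^{4m}}\sum_{n=0}^{m-1}(-1)^{n}\binom{m-1}{n}c_{4m+n+1},$$ $$K_{1}=-|a|^{4/5}+\sum_{m=1}^{\infty}\frac{(-1)^{m}}{a^{4(m-1)}}\sum_{n=0}^{m-1}(-1)^{n}\binom{m-1}{n}c_{4m+n-3},$$ and for $j=2,3,4$ $$K_{j}=\sum_{m=1}^{\infty}\frac{(-1)^{m}}{a^{4(m-1)}}\sum_{n=0}^{m-1}(-1)^{n}\binom{m-1}{n}c_{4m+n-4+j}.$$ Then these series converge and $y=x/a$ satisfies the quartic equation $$K_{4}y^{4}+K_{3}y^{3}+K_{2}y^{2}+K_{1}y+K_{0}=0 .$$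
   Context: The real solution $x$ of $x^5+x=a$ is unique since $x\mapsto x^5+x$ is strictly increasing; it satisfies $0<x/a<1$. Here $|a|^{4/5}$ denotes the positive real value. The quantities $K_0,\dots,K_4$ (called ''ultraradicals'' in $a$) are series in $a^{-4}$ obtained by expanding $y=|a|^{-4/5}(1-y)^{1/5}$ binomially and repeatedly replacing $y^{5}$ by $a^{-4}(1-y)$ to eliminate all powers $y^k$, $k\ge5$. *)

From Stdlib Require Import Reals.
From Coquelicot Require Import Coquelicot.
Open Scope R_scope.

(* c k for k >= 1: c 1 = 1/5, c (k+1) = (5k-1)/(5(k+1)) c k.
   c 0 is an unused dummy value (never referenced by the K_j). *)
Fixpoint c (k : nat) : R :=
  match k with
  | O => 0
  | S O => 1 / 5
  | S (S k' as k1) => (5 * INR k1 - 1) / (5 * INR (S k1)) * c k1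
  end.

Definition binom (m n : nat) : R := Binomial.C m n.

(* Summation index shift: the paper's outer index m >= 1 is written here as
   m = p + 1 with p : nat, and the inner sum over n = 0 .. m-1 = 0 .. p is
   Coquelicot's sum_n (which sums indices 0..p). *)

Definition K0term (a : R) (p : nat) : R :=
  (-1) ^ (S p) / a ^ (4 * S p) *
  sum_n (fun n => (-1) ^ n * binom p n * c (4 * S p + n + 1)) p.

Definition Kterm (a : R) (j : nat) (p : nat) : R :=
  (-1) ^ (S p) / a ^ (4 * p) *
  sum_n (fun n => (-1) ^ n * binom p n * c (4 * S p + n - 4 + j)) p.

Definition K0 (a : R) : R := 1 + Series (K0term a).
Definition K1 (a : R) : R := - Rpower (Rabs a) (4 / 5) + Series (Kterm a 1).
Definition K2 (a : R) : R := Series (Kterm a 2).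
Definition K3 (a : R) : R := Series (Kterm a 3).
Definition K4 (a : R) : R := Series (Kterm a 4).

From Stdlib Require Import Reals Lra Lia.
From Coquelicot Require Import Coquelicot.
Open Scope R_scope.

(* With b = a^-4 and y = x/a we have 0 < y < 1 and y^5 = b (1 - y), so
   |a|^(4/5) y = (1 - y)^(1/5) = 1 - sum_k c_k y^k.  Up to the factor -(-b)^p, the p-th
   terms of the K-series are the p-th forward differences D^p c at k + 4p (k = 1..4, and
   k = 5 times b for K_0).  Writing T_p = sum_(k >= 1) D^p c_(k+4p) y^k, substituting
   y^5 = b (1 - y) into its terms of degree >= 5 and summing by parts gives
   T_p + b T_(p+1) = sum_(k=1..4) D^p c_(k+4p) y^k + b D^p c_(5+4p),
   so the linear combination of the K-series telescopes to -T_0 = -(1 - (1 - y)^(1/5)).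
   Convergence is geometric, since D^p c_N = c_N prod_(i<p) (i + 6/5)/(N + i + 1) lies
   in [0, 1/5]. *)

Lemma c_S k : (1 <= k)%nat -> c (S k) = (5 * INR k - 1) / (5 * INR (S k)) * c k.
Proof. destruct k as [|k]; [lia | reflexivity]. Qed.

Lemma Rdiv_unit_interval p q : 0 <= p -> p <= q -> 0 < q -> 0 <= p / q <= 1.
Proof.
  intros Hp Hpq Hq. split; [apply Rdiv_le_0_compat | apply (Rdiv_le_1 p q)]; lra.
Qed.

Lemma c_bounds k : 0 <= c k <= 1/5.
Proof.
  induction k as [|[|k] IH]; [simpl; lra | simpl; lra |].
  rewrite c_S, (S_INR (S k)) by lia.
  assert (Hk : 1 <= INR (S k)) by (apply (le_INR 1); lia).
  assert (Hr : 0 <= (5 * INR (S k) - 1) / (5 * (INR (S k) + 1)) <= 1).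
  { apply Rdiv_unit_interval; lra. }
  split; nra.
Qed.

Fixpoint fdiff (u : nat -> R) (p N : nat) : R :=
  match p with
  | O => u N
  | S q => fdiff u q N - fdiff u q (S N)
  end.

Lemma fdiff_binomial u p N :
  sum_f_R0 (fun n => (-1) ^ n * Binomial.C p n * u (N + n)%nat) p = fdiff u p N.
Proof.
  revert N; induction p as [|p IH]; intros N.
  - simpl. rewrite Nat.add_0_r, C_n_0. ring.
  - simpl fdiff. rewrite <- !IH, (decomp_sum _ (S p)) by lia. simpl pred.
    rewrite C_n_0, Nat.add_0_r. destruct p as [|p].
    + simpl. rewrite C_n_n, C_n_0, !Nat.add_0_r, Nat.add_1_r. ring.
    + rewrite (decomp_sum (fun n => (-1) ^ n * Binomial.C (S p) n * u (N + n)%nat) (S p))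
        by lia.
      simpl pred. rewrite C_n_0, Nat.add_0_r.
      rewrite tech5, (tech5 (fun n => (-1) ^ n * Binomial.C (S p) n * u (S N + n)%nat)).
      rewrite (sum_eq _ (fun i => (-1) ^ S i * Binomial.C (S p) (S i) * u (N + S i)%nat
                                  - (-1) ^ i * Binomial.C (S p) i * u (S N + i)%nat)).
      2:{ intros i Hi. rewrite <- pascal by lia.
          replace (S N + i)%nat with (N + S i)%nat by lia. simpl. ring. }
      rewrite minus_sum, !C_n_n.
      replace (S N + S p)%nat with (N + S (S p))%nat by lia.
      simpl. lra.
Qed.

Fixpoint fdiff_c_factor (p N : nat) : R :=
  match p with
  | O => 1
  | S q => fdiff_c_factor q N * ((INR q + 6/5) / (INR N + INR q + 1))
  end.

Lemma fdiff_c_factor_shift p N :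
  fdiff_c_factor p (S N) * (INR N + INR p + 1) = fdiff_c_factor p N * (INR N + 1).
Proof.
  assert (HN := pos_INR N).
  induction p as [|p IH]; cbn [fdiff_c_factor].
  - simpl. lra.
  - assert (Hp := pos_INR p).
    replace (fdiff_c_factor p (S N))
      with (fdiff_c_factor p N * (INR N + 1) / (INR N + INR p + 1))
      by (rewrite <- IH; field; lra).
    rewrite !S_INR. field. lra.
Qed.

Lemma fdiff_c_factor_bounds p N : (1 <= N)%nat -> 0 <= fdiff_c_factor p N <= 1.
Proof.
  intros HN. assert (H1 : 1 <= INR N) by (apply (le_INR 1); lia).
  induction p as [|p IH]; cbn [fdiff_c_factor]; [lra|].
  assert (Hp := pos_INR p).
  assert (Hr : 0 <= (INR p + 6/5) / (INR N + INR p + 1) <= 1)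
    by (apply Rdiv_unit_interval; lra).
  split; nra.
Qed.

Lemma fdiff_c p N : (1 <= N)%nat -> fdiff c p N = c N * fdiff_c_factor p N.
Proof.
  revert N; induction p as [|p IH]; intros N HN; simpl.
  - ring.
  - rewrite !IH, c_S by lia.
    assert (H1 : 1 <= INR N) by (apply (le_INR 1); lia).
    assert (Hp := pos_INR p).
    replace (fdiff_c_factor p (S N))
      with (fdiff_c_factor p N * (INR N + 1) / (INR N + INR p + 1))
      by (rewrite <- fdiff_c_factor_shift; field; lra).
    rewrite S_INR. field. lra.
Qed.

Definition cdiff (p k : nat) : R := fdiff c p (k + 4 * p).

Lemma cdiff_S p k : cdiff (S p) k = cdiff p (k + 4) - cdiff p (k + 5).
Proof. unfold cdiff. simpl fdiff. f_equal; f_equal; lia. Qed.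

Lemma cdiff_bound p k : Rabs (cdiff p k) <= 1/5.
Proof.
  unfold cdiff. destruct (Nat.eq_dec (k + 4 * p) 0) as [H0 | H0].
  - replace p with 0%nat by lia. replace k with 0%nat by lia. simpl. rewrite Rabs_R0. lra.
  - rewrite fdiff_c by lia.
    destruct (c_bounds (k + 4 * p)), (fdiff_c_factor_bounds p (k + 4 * p)); [lia|].
    rewrite Rabs_right; nra.
Qed.

Lemma pow_unit_interval_le y n k : 0 <= y < 1 -> y ^ (n + k) <= y ^ k.
Proof.
  intros Hy. rewrite pow_add.
  assert (Hk := pow_le y k ltac:(lra)).
  destruct n as [|n]; [simpl; lra|].
  destruct (pow_lt_1_compat y (S n) Hy ltac:(lia)). nra.
Qed.

Lemma ex_series_geom_dominated (u : nat -> R) y M :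
  0 <= y < 1 -> (forall k, Rabs (u k) <= M * y ^ k) -> ex_series u.
Proof.
  intros Hy Hu. apply ex_series_Rabs.
  apply (@ex_series_le R_AbsRing R_CompleteNormedModule _ (fun k => M * y ^ k)).
  - intros k. change (Rabs (Rabs (u k)) <= M * y ^ k). rewrite Rabs_Rabsolu. apply Hu.
  - apply (@ex_series_scal_l R_AbsRing R_NormedModule M (fun k => y ^ k)).
    apply ex_series_geom. rewrite Rabs_right; lra.
Qed.

Section BoundedCoefficients.

Variables (f : nat -> R) (y M : R).
Hypothesis (Hy : 0 <= y < 1) (Hf : forall k, Rabs (f k) <= M).

Lemma bounded_mul_pow_le n k : Rabs (f k * y ^ (n + k)) <= M * y ^ k.
Proof.
  rewrite Rabs_mult, <- RPow_abs, (Rabs_right y) by lra.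
  assert (H0 := Rabs_pos (f k)). assert (Hk := Hf k).
  assert (Hp := pow_le y (n + k) ltac:(lra)).
  assert (Hle := pow_unit_interval_le y n k Hy). nra.
Qed.

Lemma ex_series_bounded_pow n : ex_series (fun k => f k * y ^ (n + k)).
Proof. apply (ex_series_geom_dominated _ y M Hy), bounded_mul_pow_le. Qed.

Lemma Series_bounded_pow_le n : Rabs (Series (fun k => f k * y ^ (n + k))) <= M / (1 - y).
Proof.
  assert (Habs : ex_series (fun k => Rabs (f k * y ^ (n + k)))).
  { apply (ex_series_geom_dominated _ y M Hy). intros k.
    rewrite Rabs_Rabsolu. apply bounded_mul_pow_le. }
  eapply Rle_trans; [apply Series_Rabs, Habs|].
  apply Rle_trans with (Series (fun k => M * y ^ k)).
  - apply Series_le; [intros k; split; [apply Rabs_pos | apply bounded_mul_pow_le]|].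
    apply (@ex_series_scal_l R_AbsRing R_NormedModule M (fun k => y ^ k)).
    apply ex_series_geom. rewrite Rabs_right; lra.
  - rewrite Series_scal_l, Series_geom by (rewrite Rabs_right; lra). lra.
Qed.

Lemma Series_summation_by_parts :
  Series (fun k => f k * (y ^ k - y ^ S k))
  = f 0%nat - Series (fun k => (f k - f (S k)) * y ^ S k).
Proof.
  assert (H0 := ex_series_bounded_pow 0). assert (H1 := ex_series_bounded_pow 1).
  assert (HS : ex_series (fun k => f (S k) * y ^ (0 + S k)))
    by exact (proj1 (ex_series_incr_1 _) H0).
  rewrite (Series_ext _ (fun k => f k * y ^ (0 + k) - f k * y ^ (1 + k)))
    by (intros; simpl; ring).
  rewrite (Series_ext (fun k => (f k - f (S k)) * y ^ S k)
             (fun k => f k * y ^ (1 + k) - f (S k) * y ^ (0 + S k)))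
    by (intros; simpl; ring).
  rewrite !Series_minus, (Series_incr_1 _ H0) by assumption.
  simpl. lra.
Qed.

End BoundedCoefficients.

Definition PSeries_tail (e : nat -> R) (y : R) : R :=
  Series (fun k => e (S k) * y ^ S k).

Lemma PSeries_tail_bound e y M :
  0 <= y < 1 -> (forall k, Rabs (e k) <= M) -> Rabs (PSeries_tail e y) <= M / (1 - y).
Proof.
  intros Hy He. exact (Series_bounded_pow_le (fun k => e (S k)) y M Hy (fun k => He (S k)) 1).
Qed.

(* The terms of degree >= 5 are b e_(k+5) (y^k - y^(k+1)); then sum by parts. *)
Lemma PSeries_tail_reduce e y b M :
  0 <= y < 1 -> y ^ 5 = b * (1 - y) -> (forall k, Rabs (e k) <= M) ->
  PSeries_tail e y
  = e 1%nat * y + e 2%nat * y ^ 2 + e 3%nat * y ^ 3 + e 4%nat * y ^ 4 + b * e 5%nat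
    - b * PSeries_tail (fun k => e (k + 4)%nat - e (k + 5)%nat) y.
Proof.
  intros Hy H5 He.
  unfold PSeries_tail at 1.
  rewrite (Series_incr_n _ 4) by
    (lia || exact (ex_series_bounded_pow (fun k => e (S k)) y M Hy (fun k => He (S k)) 1)).
  rewrite (Series_ext _ (fun k => b * (e (k + 5)%nat * (y ^ k - y ^ S k)))).
  2:{ intros k. replace (S (4 + k)) with (k + 5)%nat by lia.
      rewrite pow_add, H5. simpl. ring. }
  rewrite Series_scal_l, (Series_summation_by_parts _ y M Hy (fun k => He (k + 5)%nat)).
  unfold PSeries_tail.
  rewrite (Series_ext (fun k => (e (k + 5)%nat - e (S k + 5)%nat) * y ^ S k)
             (fun k => (e (S k + 4)%nat - e (S k + 5)%nat) * y ^ S k))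
    by (intros k; do 3 f_equal; lia).
  simpl. ring.
Qed.

Lemma is_series_telescoping (u : nat -> R) :
  is_lim_seq u 0 -> is_series (fun n => u n - u (S n)) (u 0%nat).
Proof.
  intros Hu.
  assert (Hsum : is_lim_seq (sum_n (fun n => u n - u (S n))) (u 0%nat)).
  { apply (is_lim_seq_ext (fun n => u 0%nat - u (S n))).
    - intros n. rewrite sum_n_Reals.
      induction n as [|n IH]; simpl sum_f_R0; [ring | rewrite <- IH; ring].
    - replace (Finite (u 0%nat)) with (Finite (u 0%nat - 0)) by (f_equal; ring).
      apply is_lim_seq_minus'; [apply is_lim_seq_const|].
      apply -> is_lim_seq_incr_1. exact Hu. }
  exact Hsum.
Qed.

Lemma is_lim_seq_geom_bounded q (g : nat -> R) M :
  Rabs q < 1 -> (forall n, Rabs (g n) <= M) -> is_lim_seq (fun n => q ^ n * g n) 0.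
Proof.
  intros Hq Hg. apply is_lim_seq_abs_0.
  apply (is_lim_seq_le_le (fun _ => 0) _ (fun n => Rabs q ^ n * M)).
  - intros n. split; [apply Rabs_pos|]. rewrite Rabs_mult, <- RPow_abs.
    apply Rmult_le_compat_l; [apply pow_le, Rabs_pos | apply Hg].
  - apply is_lim_seq_const.
  - replace (Finite 0) with (Finite (0 * M)) by (f_equal; ring).
    apply is_lim_seq_mult'; [apply is_lim_seq_geom; rewrite Rabs_Rabsolu; exact Hq
                            | apply is_lim_seq_const].
Qed.

Lemma CV_radius_c t : Rabs t < 1 -> Rbar_lt (Rabs t) (CV_radius c).
Proof.
  intros Ht. set (r := (Rabs t + 1) / 2).
  assert (Hr : Rabs t < r < 1) by (unfold r; lra).
  assert (Hr0 : 0 <= r) by (pose proof (Rabs_pos t); lra).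
  apply Rbar_lt_le_trans with (Finite r); [simpl; lra|].
  apply (CV_radius_bounded c). exists (1/5). intros n.
  destruct (c_bounds n).
  rewrite Rabs_mult, <- RPow_abs, (Rabs_right r), (Rabs_right (c n)) by lra.
  assert (Hp := pow_le r n Hr0).
  assert (H1 := pow_unit_interval_le r n 0 ltac:(lra)).
  rewrite Nat.add_0_r in H1. simpl in H1. nra.
Qed.

Lemma PS_derive_c_S n : PS_derive c (S n) = PS_derive c n - c (S n) / 5.
Proof.
  unfold PS_derive. rewrite (c_S (S n)) by lia.
  assert (Hn : INR (S (S n)) <> 0) by (apply not_0_INR; lia).
  rewrite (S_INR (S n)) in *. field. exact Hn.
Qed.

Lemma PSeries_c_ode t : Rabs t < 1 ->
  (1 - t) * PSeries (PS_derive c) t = (1 - PSeries c t) / 5.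
Proof.
  intros Ht.
  assert (Hd : ex_series (fun n => PS_derive c n * t ^ n))
    by apply ex_pseries_R, ex_pseries_derive, CV_radius_c, Ht.
  assert (Hc : ex_series (fun n => c n * t ^ n))
    by apply ex_pseries_R, CV_radius_inside, CV_radius_c, Ht.
  assert (HcS : ex_series (fun n => c (S n) * t ^ S n))
    by exact (proj1 (ex_series_incr_1 _) Hc).
  assert (HP : PSeries c t = Series (fun n => c (S n) * t ^ S n)).
  { unfold PSeries. rewrite Series_incr_1 by exact Hc. simpl c. ring. }
  assert (HD : PSeries (PS_derive c) t
               = 1/5 + t * PSeries (PS_derive c) t - / 5 * PSeries c t).
  { unfold PSeries at 1. rewrite Series_incr_1 by exact Hd.
    rewrite (Series_ext _
               (fun n => t * (PS_derive c n * t ^ n) - / 5 * (c (S n) * t ^ S n)))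
      by (intros n; rewrite PS_derive_c_S; simpl; field).
    rewrite Series_minus, !Series_scal_l, HP.
    - unfold PS_derive at 1, PSeries. simpl. field.
    - exact (@ex_series_scal_l R_AbsRing R_NormedModule t _ Hd).
    - exact (@ex_series_scal_l R_AbsRing R_NormedModule (/ 5) _ HcS). }
  set (D := PSeries (PS_derive c) t) in *.
  replace ((1 - t) * D) with (D - t * D) by ring. lra.
Qed.

Lemma is_derive_PSeries_c_ratio t : Rabs t < 1 ->
  is_derive (fun s => (1 - PSeries c s) * exp (- ln (1 - s) / 5)) t 0.
Proof.
  intros Ht. assert (Ht1 : t < 1) by (apply Rabs_lt_between in Ht; lra).
  assert (Hexp : is_derive (fun s => exp (- ln (1 - s) / 5)) t
                   (exp (- ln (1 - t) / 5) * (/ (1 - t) / 5))).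
  { auto_derive; [lra|]. replace (1 + - t) with (1 - t) by ring. unfold Rdiv. field. lra. }
  assert (HP := is_derive_minus _ _ t _ _ (is_derive_const 1 t)
                  (is_derive_PSeries c t (CV_radius_c t Ht))).
  assert (Hd := is_derive_mult _ _ t _ _ HP Hexp Rmult_comm).
  match type of Hd with is_derive _ _ ?d => replace 0 with d; [exact Hd|] end.
  assert (Hode := PSeries_c_ode t Ht).
  unfold plus, mult, minus, zero, opp; simpl. unfold plus; simpl.
  replace (1 + - PSeries c t) with (5 * ((1 - t) * PSeries (PS_derive c) t)) by lra.
  field. lra.
Qed.

Lemma one_sub_PSeries_c y : Rabs y < 1 -> 1 - PSeries c y = exp (ln (1 - y) / 5).
Proof.
  intros Hy.
  assert (Hin : forall t, Rmin 0 y <= t <= Rmax 0 y -> Rabs t < 1).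
  { intros t. unfold Rmin, Rmax. destruct (Rle_dec 0 y); split_Rabs; lra. }
  set (h := fun s => (1 - PSeries c s) * exp (- ln (1 - s) / 5)).
  destruct (MVT_gen h 0 y (fun _ => 0)) as [z [_ Hconst]].
  - intros t Ht. apply is_derive_PSeries_c_ratio, Hin. lra.
  - intros t Ht.
    apply continuity_pt_filterlim, (@ex_derive_continuous R_AbsRing R_NormedModule).
    exists 0. apply is_derive_PSeries_c_ratio, Hin, Ht.
  - unfold h in Hconst. rewrite PSeries_0, !Rminus_0_r, ln_1 in Hconst. simpl c in Hconst.
    replace (- 0 / 5) with 0 in Hconst by field.
    replace (- ln (1 - y) / 5) with (- (ln (1 - y) / 5)) in Hconst by field.
    rewrite exp_0, exp_Ropp in Hconst.
    assert (He := exp_pos (ln (1 - y) / 5)).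
    apply (Rmult_eq_reg_r (/ exp (ln (1 - y) / 5))); [|apply Rinv_neq_0_compat; lra].
    rewrite Rinv_r by lra. lra.
Qed.

Lemma sum_n_binom_c p k :
  sum_n (fun n => (-1) ^ n * binom p n * c (k + 4 * p + n)%nat) p = cdiff p k.
Proof. rewrite sum_n_Reals. apply fdiff_binomial. Qed.

Lemma alternating_inv_pow4 a p : a <> 0 -> (-1) ^ S p / a ^ (4 * p) = - (- / a ^ 4) ^ p.
Proof.
  intros Ha. rewrite pow_mult.
  replace (- / a ^ 4) with (-1 * / a ^ 4) by ring.
  rewrite Rpow_mult_distr, pow_inv. simpl pow at 1.
  field. apply pow_nonzero, pow_nonzero, Ha.
Qed.

Lemma Kterm_cdiff a j p : a <> 0 -> Kterm a j p = - (- / a ^ 4) ^ p * cdiff p j.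
Proof.
  intros Ha. unfold Kterm. rewrite alternating_inv_pow4, <- sum_n_binom_c by exact Ha.
  f_equal. apply sum_n_ext. intros n. do 2 f_equal. lia.
Qed.

Lemma K0term_cdiff a p : a <> 0 -> K0term a p = - (- / a ^ 4) ^ p * (/ a ^ 4 * cdiff p 5).
Proof.
  intros Ha. unfold K0term.
  replace ((-1) ^ S p / a ^ (4 * S p)) with ((-1) ^ S p / a ^ (4 * p) * / a ^ 4)
    by (replace (4 * S p)%nat with (4 * p + 4)%nat by lia; rewrite pow_add;
        field; repeat split; try apply pow_nonzero; exact Ha).
  rewrite alternating_inv_pow4, <- sum_n_binom_c by exact Ha.
  rewrite Rmult_assoc. do 2 f_equal. apply sum_n_ext. intros n. do 2 f_equal. lia.
Qed.

Lemma pow4_abs a : Rabs a ^ 4 = a ^ 4.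
Proof.
  rewrite RPow_abs. apply Rabs_right.
  replace (a ^ 4) with ((a ^ 2) ^ 2) by ring. apply Rle_ge, pow2_ge_0.
Qed.

Lemma Rabs_gt_1_neq_0 a : 1 < Rabs a -> a <> 0.
Proof. intros Ha ->. rewrite Rabs_R0 in Ha. lra. Qed.

Lemma inv_pow4_bounds a : 1 < Rabs a -> 0 <= / a ^ 4 < 1.
Proof.
  intros Ha.
  assert (H4 : 1 < a ^ 4) by (rewrite <- pow4_abs; apply Rlt_pow_R1; [exact Ha | lia]).
  split; [left; apply Rinv_0_lt_compat; lra|].
  rewrite <- Rinv_1. apply Rinv_lt_contravar; lra.
Qed.

Lemma ex_series_Kterm a j : 1 < Rabs a -> ex_series (Kterm a j).
Proof.
  intros Ha. assert (Hb := inv_pow4_bounds a Ha).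
  assert (Ha0 := Rabs_gt_1_neq_0 a Ha).
  apply (ex_series_geom_dominated _ (/ a ^ 4) (1/5) Hb). intros p.
  rewrite Kterm_cdiff, Rabs_mult, Rabs_Ropp, <- RPow_abs, Rabs_Ropp, (Rabs_right (/ a ^ 4))
    by (exact Ha0 || lra).
  rewrite Rmult_comm. apply Rmult_le_compat_r; [apply pow_le; lra | apply cdiff_bound].
Qed.

Lemma ex_series_K0term a : 1 < Rabs a -> ex_series (K0term a).
Proof.
  intros Ha. assert (Hb := inv_pow4_bounds a Ha).
  assert (Ha0 := Rabs_gt_1_neq_0 a Ha).
  apply (ex_series_geom_dominated _ (/ a ^ 4) (1/5) Hb). intros p.
  rewrite K0term_cdiff, Rabs_mult, Rabs_Ropp, <- RPow_abs, Rabs_Ropp, Rabs_mult,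
    (Rabs_right (/ a ^ 4)) by (exact Ha0 || lra).
  assert (Hp := pow_le (/ a ^ 4) p ltac:(lra)).
  assert (Hc := cdiff_bound p 5). assert (Hc0 := Rabs_pos (cdiff p 5)).
  assert (/ a ^ 4 * Rabs (cdiff p 5) <= 1/5) by nra. nra.
Qed.

Lemma PSeries_tail_cdiff_0 y : Rabs y < 1 -> PSeries_tail (cdiff 0) y = PSeries c y.
Proof.
  intros Hy. unfold PSeries, PSeries_tail.
  rewrite (Series_incr_1 (fun n => c n * y ^ n))
    by apply ex_pseries_R, CV_radius_inside, CV_radius_c, Hy.
  simpl c. rewrite Rmult_0_l, Rplus_0_l.
  apply Series_ext. intros k. unfold cdiff. simpl. rewrite Nat.add_0_r. reflexivity.
Qed.

Lemma PSeries_tail_cdiff_S p y :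
  PSeries_tail (fun k => cdiff p (k + 4) - cdiff p (k + 5)) y = PSeries_tail (cdiff (S p)) y.
Proof. apply Series_ext. intros k. rewrite cdiff_S. reflexivity. Qed.

Lemma K_series_combination a y : 1 < Rabs a -> 0 <= y < 1 -> y ^ 5 = / a ^ 4 * (1 - y) ->
  Series (K0term a) + y * Series (Kterm a 1) + y ^ 2 * Series (Kterm a 2)
  + y ^ 3 * Series (Kterm a 3) + y ^ 4 * Series (Kterm a 4) = - PSeries c y.
Proof.
  intros Ha Hy H5.
  assert (Ha0 := Rabs_gt_1_neq_0 a Ha).
  assert (Hb := inv_pow4_bounds a Ha).
  set (b := / a ^ 4) in *.
  set (u := fun p => (-b) ^ p * PSeries_tail (cdiff p) y).
  set (K := fun p => K0term a p + y * Kterm a 1 p + y ^ 2 * Kterm a 2 p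
                     + y ^ 3 * Kterm a 3 p + y ^ 4 * Kterm a 4 p).
  assert (HK : forall p, K p = - (u p - u (S p))).
  { intros p. unfold K, u. rewrite K0term_cdiff, !Kterm_cdiff by exact Ha0. fold b.
    rewrite (PSeries_tail_reduce (cdiff p) y b (1/5) Hy H5 (cdiff_bound p)),
      PSeries_tail_cdiff_S.
    simpl pow. ring. }
  assert (Hu : is_lim_seq u 0).
  { apply (is_lim_seq_geom_bounded (-b) _ (1/5 / (1 - y))).
    - rewrite Rabs_Ropp, Rabs_right; lra.
    - intros p. apply (PSeries_tail_bound _ y (1/5) Hy (cdiff_bound p)). }
  assert (Htel : is_series K (- u 0%nat)).
  { apply (is_series_ext (fun p => opp (u p - u (S p)))).
    - intros p. rewrite HK. reflexivity.
    - apply (@is_series_opp R_AbsRing R_NormedModule), is_series_telescoping, Hu. }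
  assert (Hlin : is_series K
    (Series (K0term a) + y * Series (Kterm a 1) + y ^ 2 * Series (Kterm a 2)
     + y ^ 3 * Series (Kterm a 3) + y ^ 4 * Series (Kterm a 4))).
  { assert (HKj : forall j c0, is_series (fun p => c0 * Kterm a j p) (c0 * Series (Kterm a j)))
      by (intros j c0; apply (@is_series_scal_l R_AbsRing R_NormedModule),
                              Series_correct, ex_series_Kterm, Ha).
    repeat apply (@is_series_plus R_AbsRing R_NormedModule); try apply HKj.
    apply Series_correct, ex_series_K0term, Ha. }
  rewrite <- (is_series_unique _ _ Hlin), (is_series_unique _ _ Htel).
  unfold u. rewrite PSeries_tail_cdiff_0 by (rewrite Rabs_right; lra). simpl. ring.
Qed.

Lemma quintic_ratio a x : a <> 0 -> x ^ 5 + x = a ->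
  0 < x / a < 1 /\ (x / a) ^ 5 = / a ^ 4 * (1 - x / a).
Proof.
  intros Ha Hx. set (y := x / a).
  assert (Hy : y ^ 5 * a ^ 4 = 1 - y).
  { unfold y. replace (1 - x / a) with ((x ^ 5 + x - x) / a) by (rewrite Hx; field; exact Ha).
    field. exact Ha. }
  assert (Ha4 : 0 < a ^ 4) by (rewrite <- pow4_abs; apply pow_lt, Rabs_pos_lt, Ha).
  assert (Hy0 : 0 < y).
  { destruct (Rlt_or_le 0 y) as [Hpos | Hneg]; [exact Hpos|].
    assert (y ^ 5 <= 0) by (replace (y ^ 5) with (- (- y) ^ 5) by ring;
                           assert (0 <= (- y) ^ 5) by (apply pow_le; lra); lra).
    nra. }
  assert (0 < y ^ 5) by (apply pow_lt, Hy0).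
  split; [nra|].
  rewrite <- Hy. field. lra.
Qed.

Lemma Rpower_abs_mul_ratio a y : a <> 0 -> 0 < y -> y ^ 5 = / a ^ 4 * (1 - y) ->
  Rpower (Rabs a) (4 / 5) * y = exp (ln (1 - y) / 5).
Proof.
  intros Ha Hy H5.
  assert (Hapos := Rabs_pos_lt a Ha).
  assert (H1y : 1 - y = y ^ 5 * Rabs a ^ 4).
  { rewrite pow4_abs, H5. field. exact Ha. }
  rewrite H1y, ln_mult, !ln_pow by (try apply pow_lt; lra).
  unfold Rpower. replace ((INR 5 * ln y + INR 4 * ln (Rabs a)) / 5)
    with (4 / 5 * ln (Rabs a) + ln y) by (simpl; field).
  rewrite exp_plus, exp_ln by exact Hy. reflexivity.
Qed.

Theorem mainTheorem2 (a x : R) (ha : 1 < Rabs a) (hx : x ^ 5 + x = a) :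
  ex_series (K0term a) /\ ex_series (Kterm a 1) /\ ex_series (Kterm a 2) /\
  ex_series (Kterm a 3) /\ ex_series (Kterm a 4) /\
  (let y := x / a in
   K4 a * y ^ 4 + K3 a * y ^ 3 + K2 a * y ^ 2 + K1 a * y + K0 a = 0).
Proof.
  assert (Ha := Rabs_gt_1_neq_0 a ha).
  repeat split; try apply ex_series_Kterm; try apply ex_series_K0term; try exact ha.
  intros y. destruct (quintic_ratio a x Ha hx) as [Hy H5]. fold y in Hy, H5.
  assert (Hsum := K_series_combination a y ha ltac:(lra) H5).
  assert (Hbin := one_sub_PSeries_c y ltac:(rewrite Rabs_right; lra)).
  assert (Hroot := Rpower_abs_mul_ratio a y Ha (proj1 Hy) H5).
  unfold K0, K1, K2, K3, K4. lra.
Qed.
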